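(* Suppose $d_i-a_i<2t_i$ for every job $i$. Then for any set $S$ of jobs there is at most one order in which all jobs of $S$ can be executed nonpreemptively, each job $i$ processed without interruption during an interval $[s_i,s_i+t_i)$ with $a_i\le s_i\le d_i-t_i$, with the intervals pairwise disjoint. In particular, the ordering of the executed jobs in any nonpreemptive schedule is uniquely determined by the set of executed jobs.
   Context: Jobs $1,\dots,n$ have nonnegative integer processing times $t_i$, arrival times $a_i$ and deadlines $d_i$; they are executed on a single processor that processes one job at a time. *)

From mathcomp Require Import all_boot.
Set Implicit Arguments. Unset Strict Implicit. Unset Printing Implicit Defensive.

(* Jobs are indexed by 'I_n; t = processing times, a = arrival times,
   d = deadlines; times are natural numbers (discrete time). *)

Definition intervals_disjoint (s t s' t' : nat) : Prop :=
  forall x : nat, ~ ((s <= x < s + t) /\ (s' <= x < s' + t')).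

Definition feasible_schedule (n : nat) (t a d : 'I_n -> nat)
    (S : {set 'I_n}) (s : 'I_n -> nat) : Prop :=
  (forall i, i \in S -> a i <= s i /\ s i + t i <= d i) /\
  (forall i j, i \in S -> j \in S -> i != j ->
     intervals_disjoint (s i) (t i) (s j) (t j)).

From mathcomp Require Import all_boot.
From mathcomp Require Import zify.

Set Implicit Arguments.
Unset Strict Implicit.

(* With slack d_i - a_i < 2 t_i, every job has positive length and its
   latest start d_i - t_i lies before its earliest completion a_i + t_i.
   If job i starts no later than job j, disjointness forces i to finish
   before j starts, so d_i - t_i < a_i + t_i <= s_j <= d_j - t_j.  Hence in
   every feasible schedule the jobs run in increasing order of latest start,
   an order that does not depend on the schedule. *)

Lemma intervals_disjoint_end_leq (s t s' t' : nat) :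
  0 < t' -> intervals_disjoint s t s' t' -> s <= s' -> s + t <= s'.
Proof.
move=> t'_gt0 dis le_ss'; rewrite leqNgt; apply/negP => lt_s'_end.
by apply: (dis s'); lia.
Qed.

Section SlackSchedule.

Variables (n : nat) (t a d : 'I_n -> nat).
Hypothesis slack : forall i, d i < a i + 2 * t i.
Variables (S : {set 'I_n}) (s : 'I_n -> nat).
Hypothesis feas : feasible_schedule t a d S s.

Lemma feasible_length_gt0 i : i \in S -> 0 < t i.
Proof. by move=> iS; have [? ?] := feas.1 i iS; have := slack i; lia. Qed.

Lemma feasible_leq_latest_start i j : i \in S -> j \in S -> i != j ->
  s i <= s j -> d i - t i < d j - t j.
Proof.
move=> iS jS neq_ij le_sij.
have i_done : s i + t i <= s j.
  apply: (intervals_disjoint_end_leq (feasible_length_gt0 jS)) le_sij.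
  exact: feas.2 i j iS jS neq_ij.
have [? ?] := feas.1 i iS; have [? ?] := feas.1 j jS; have := slack i; lia.
Qed.

Lemma feasible_ltE i j : i \in S -> j \in S -> i != j ->
  (s i < s j <-> d i - t i < d j - t j).
Proof.
move=> iS jS neq_ij; split=> [/ltnW|lt_latest].
  exact: feasible_leq_latest_start.
rewrite ltnNge; apply/negP => le_sji.
have neq_ji : j != i by rewrite eq_sym.
by have := feasible_leq_latest_start jS iS neq_ji le_sji; lia.
Qed.

End SlackSchedule.

Theorem corollary1 (n : nat) (t a d : 'I_n -> nat)
    (Hslack : forall i, d i < a i + 2 * t i)
    (S : {set 'I_n}) (s1 s2 : 'I_n -> nat) :
  feasible_schedule t a d S s1 ->
  feasible_schedule t a d S s2 ->
  forall i j, i \in S -> j \in S -> (s1 i < s1 j <-> s2 i < s2 j).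
Proof.
move=> F1 F2 i j iS jS.
have [<-|neq_ij] := eqVneq i j; first by rewrite !ltnn.
rewrite (feasible_ltE Hslack F1 iS jS neq_ij).
by rewrite (feasible_ltE Hslack F2 iS jS neq_ij).
Qed.
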